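(* If $\mu$ satisfies $\mathrm{IC}(1)$, then $\int e^{2\Lambda^*_{\overline{\mu}}(x/2)}\,d\mu(x)\int e^{-\Lambda^*_{\overline{\mu}}(x)}\,d\mu(x)\le 1$.
   Context: A pair $(\mu,W)$, with $\mu$ a probability measure on $\mathbb{R}^n$ and $W:\mathbb{R}^n\to[0,\infty]$, satisfies property $(\tau)$ if for every bounded function $f$, $\int e^{h}\,d\mu\int e^{-f}\,d\mu\le 1$, where $h(x)=\inf_{y}\{W(x-y)+f(y)\}$ is the infimum convolution of $W$ and $f$. For a measure $\mu$, $\mu'$ is its reflection through the origin, $\overline{\mu}=\mu*\mu'$, $\Lambda_\mu=\ln\int e^{\langle \cdot,y\rangle}d\mu(y)$, and $\Lambda^*_\mu(x)=\sup_y\{\langle x,y\rangle-\Lambda_\mu(y)\}$. A probability measure $\mu$ satisfies $\mathrm{IC}(\beta)$ ($\beta>0$) if the pair $(\mu,\Lambda^*_{\overline{\mu}}(\cdot/\beta))$ satisfies property $(\tau)$. *)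

From HB Require Import structures.
From mathcomp Require Import all_boot all_order all_algebra.
From mathcomp Require Import all_classical all_reals all_analysis.
Set Implicit Arguments. Unset Strict Implicit. Unset Printing Implicit Defensive.
Import Order.TTheory GRing.Theory Num.Theory.
Import numFieldNormedType.Exports.
Local Open Scope classical_set_scope.
Local Open Scope ring_scope.

(* R^n, realised as row vectors 'rV[R]_n with the Borel sigma-algebra
   (the sigma-algebra generated by the open sets of its usual topology). *)
Definition Rn (R : realType) (n : nat) :=
  g_sigma_algebraType (@open ('rV[R]_n)).

Definition dotp (R : realType) (n : nat) (x y : 'rV[R]_n) : R :=
  \sum_(i < n) x ord0 i * y ord0 i.

Local Open Scope ereal_scope.

Definition reflect_measure (R : realType) (n : nat)
  (mu : set (Rn R n) -> \bar R) : set (Rn R n) -> \bar R :=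
  pushforward mu (fun x : Rn R n => (- x)%R : Rn R n).

Definition convolution (R : realType) (n : nat)
  (mu nu : set (Rn R n) -> \bar R) : set (Rn R n) -> \bar R :=
  pushforward (mu \x nu) (fun p : (Rn R n * Rn R n)%type => (p.1 + p.2)%R : Rn R n).

Definition symmetrization (R : realType) (n : nat)
  (mu : set (Rn R n) -> \bar R) : set (Rn R n) -> \bar R :=
  convolution mu (reflect_measure mu).

Definition logLaplace (R : realType) (n : nat)
  (mu : set (Rn R n) -> \bar R) (x : 'rV[R]_n) : \bar R :=
  lne (\int[mu]_(y in [set: Rn R n]) expeR (dotp x y)%:E).

Definition legendre_logLaplace (R : realType) (n : nat)
  (mu : set (Rn R n) -> \bar R) (x : 'rV[R]_n) : \bar R :=
  ereal_sup [set (dotp x y)%:E - logLaplace mu y | y in [set: 'rV[R]_n]].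

Definition inf_conv (R : realType) (n : nat)
  (W : 'rV[R]_n -> \bar R) (f : 'rV[R]_n -> R) (x : 'rV[R]_n) : \bar R :=
  ereal_inf [set W (x - y)%R + (f y)%:E | y in [set: 'rV[R]_n]].

Definition property_tau (R : realType) (n : nat)
  (mu : probability (Rn R n) R) (W : 'rV[R]_n -> \bar R) : Prop :=
  forall f : Rn R n -> R,
    measurable_fun [set: Rn R n] f ->
    (exists M : R, forall x, (`|f x| <= M)%R) ->
    (\int[mu]_(x in [set: Rn R n]) expeR (inf_conv W f x)) *
    (\int[mu]_(x in [set: Rn R n]) expeR (- (f x)%:E)) <= 1.

Definition IC (R : realType) (n : nat) (beta : R)
  (mu : probability (Rn R n) R) : Prop :=
  property_tau mu
    (fun x => legendre_logLaplace (symmetrization mu) (beta^-1 *: x)%R).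

From HB Require Import structures.
From mathcomp Require Import all_boot all_order all_algebra.
From mathcomp Require Import all_classical all_reals all_analysis.
From mathcomp Require Import lra.
Set Implicit Arguments.
Unset Strict Implicit.
Unset Printing Implicit Defensive.
Import Order.TTheory GRing.Theory Num.Theory.
Import numFieldNormedType.Exports.
Import HBNNSimple.
Local Open Scope classical_set_scope.
Local Open Scope ring_scope.
Local Open Scope ereal_scope.

(* Since Lambda^* is a supremum of affine functions,
   2 Lambda^*(x/2) <= Lambda^*(x - y) + Lambda^*(y), and Lambda^* >= 0 because
   Lambda_mubar(0) = ln mubar(R^n) <= 0.  Hence for the bounded truncation
   f = min(Lambda^*, k), measurable because Lambda^* is lower semicontinuous,
   the infimum convolution of Lambda^* and f dominates min(2 Lambda^*(x/2), k),
   while e^-f >= e^-Lambda^*; property (tau) applied to f gives the inequality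
   with 2 Lambda^*(x/2) truncated at k.  Every simple function below
   e^(2 Lambda^*(x/2)) lies below one of these truncations, so k -> oo removes
   the truncation. *)

Lemma ge_ereal_supD (R : realType) (X Y : set \bar R) (S : \bar R) :
  X !=set0 -> Y !=set0 -> (forall x, X x -> 0 <= x) -> (forall y, Y y -> 0 <= y) ->
  (forall x y, X x -> Y y -> x + y <= S) -> ereal_sup X + ereal_sup Y <= S.
Proof.
move=> [x0 Xx0] [y0 Yy0] X0 Y0 XYS.
have S0 : 0 <= S := le_trans (adde_ge0 (X0 _ Xx0) (Y0 _ Yy0)) (XYS _ _ Xx0 Yy0).
case: S XYS S0 => [s| |] XYS S0; [|by rewrite leey|by []].
have Xfin x : X x -> x \is a fin_num.
  move=> Xx; rewrite ge0_fin_numE ?X0//.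
  exact: le_lt_trans (le_trans (leeDl _ (Y0 _ Yy0)) (XYS _ _ Xx Yy0)) (ltry s).
have supY x : X x -> ereal_sup Y <= s%:E - x.
  by move=> Xx; apply: ge_ereal_sup => y Yy; rewrite lee_suber_addl ?XYS//; exact: Xfin.
have supYfin : ereal_sup Y \is a fin_num.
  rewrite ge0_fin_numE; last exact: le_trans (Y0 _ Yy0) (ereal_sup_ubound Yy0).
  apply: le_lt_trans (supY _ Xx0) _; rewrite -(fineK (Xfin _ Xx0)) -EFinB.
  exact: ltry.
rewrite -lee_suber_addr//; apply: ge_ereal_sup => x Xx.
by rewrite lee_suber_addr// -lee_suber_addl ?supY//; exact: Xfin.
Qed.

(* The symmetrization mubar is only a set function: x |-> mu(x - A) is not
   known to be measurable.  Integrals against mubar, and of such functions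
   against mu, are therefore handled through the defining supremum over simple
   functions, without measurability assumptions. *)
Section setfun_integral.
Context d (T : measurableType d) (R : realType) (M : set T -> \bar R).
Hypothesis M0 : M set0 = 0.

Lemma sintegralE_setfun (f : T -> R) :
  sintegral M f = \sum_(r \in range f) r%:E * M (f @^-1` [set r]).
Proof.
rewrite (fsbig_widen (range f) setT)//= => r [_ Nfr] /=.
by rewrite preimage10// M0 mule0.
Qed.

Lemma ge0_integralTE_setfun (f : T -> \bar R) : (forall x, 0 <= f x) ->
  \int[M]_x f x = ereal_sup [set sintegral M h |
     h in [set h : {nnsfun T >-> R} | forall x, (h x)%:E <= f x]].
Proof.
move=> f0; rewrite /integral patch_setT.
have -> : f^\+ = f by apply/funext => x; rewrite (@ge0_funeposE _ _ setT)// in_setT.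
have -> : f^\- = cst 0 by apply/funext => x; rewrite (@ge0_funenegE _ _ setT)// in_setT.
suff -> : ereal_sup [set sintegral M h |
     h in [set h : {nnsfun T >-> R} | forall x, (h x)%:E <= cst 0 x]] = 0 by rewrite sube0.
have sintegral0 (h : {nnsfun T >-> R}) : (forall x, (h x)%:E <= 0) -> sintegral M h = 0.
  move=> h0; rewrite sintegralE_setfun fsbig1// => _ [x _ <-].
  have -> : h x = 0%R by apply/eqP; rewrite eq_le -lee_fin h0 /= fun_ge0.
  by rewrite mul0e.
apply/eqP; rewrite eq_le; apply/andP; split.
  by apply: ge_ereal_sup => _ [h h0 <-]; rewrite sintegral0.
by apply: ereal_sup_ubound; exists nnsfun0 => //; rewrite sintegral0.
Qed.

End setfun_integral.

Section ge0_integral_nonmeasurable.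
Context d (T : measurableType d) (R : realType) (mu : {measure set T -> \bar R}).
Implicit Types f g : T -> \bar R.

Lemma ge0_le_integralT f g : (forall x, 0 <= f x) -> (forall x, f x <= g x) ->
  \int[mu]_x f x <= \int[mu]_x g x.
Proof.
move=> f0 fg; have g0 x : 0 <= g x := le_trans (f0 x) (fg x).
rewrite !ge0_integralTE//; apply: ereal_sup_le => _ [h hf <-].
by exists h => // x; exact: le_trans (hf x) (fg x).
Qed.

Lemma ge0_integralZl_le (r : R) f : (0 <= r)%R -> (forall x, 0 <= f x) ->
  r%:E * \int[mu]_x f x <= \int[mu]_x (r%:E * f x).
Proof.
move=> r0 f0; have rf0 x : 0 <= r%:E * f x by rewrite mule_ge0.
move: r0; rewrite le_eqVlt => /predU1P[<-|r0].
  by rewrite mul0e; apply: integral_ge0 => x _; rewrite mul0e.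
rewrite !ge0_integralTE// -ereal_sup_pZl//; apply: ge_ereal_sup => _ [_ [h hf <-] <-].
apply: ereal_sup_ubound => /=; exists (scale_nnsfun h (ltW r0)); last exact: sintegralrM.
by move=> x /=; rewrite EFinM lee_pmul2l.
Qed.

Lemma ge0_integralD_le f g : (forall x, 0 <= f x) -> (forall x, 0 <= g x) ->
  \int[mu]_x f x + \int[mu]_x g x <= \int[mu]_x (f x + g x).
Proof.
move=> f0 g0; have fg0 x : 0 <= f x + g x by rewrite adde_ge0.
rewrite !ge0_integralTE//; apply: ge_ereal_supD.
- by exists (sintegral mu (@nnsfun0 _ T R)), nnsfun0.
- by exists (sintegral mu (@nnsfun0 _ T R)), nnsfun0.
- by move=> _ [h _ <-]; exact: sintegral_ge0.
- by move=> _ [h _ <-]; exact: sintegral_ge0.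
move=> _ _ [h1 h1f <-] [h2 h2g <-]; rewrite -sintegralD.
apply: ereal_sup_ubound => /=; exists (add_nnsfun h1 h2) => //= x.
by rewrite EFinD leeD.
Qed.

Lemma ge0_integral_sum_le (I : Type) (s : seq I) (F : I -> T -> \bar R) :
  (forall i x, 0 <= F i x) ->
  \sum_(i <- s) \int[mu]_x F i x <= \int[mu]_x \sum_(i <- s) F i x.
Proof.
move=> F0; elim: s => [|i s IHs].
  by rewrite big_nil; apply: integral_ge0 => x _; rewrite big_nil.
under [X in _ <= X]eq_integral do rewrite big_cons.
rewrite big_cons; apply: le_trans (leeD (lexx _) IHs) _.
by apply: ge0_integralD_le => // x; exact: sume_ge0.
Qed.

Lemma integral_expeR_le_trunc (g : T -> \bar R) (c : R) (a : \bar R) : (0 <= c)%R ->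
  (forall k : R, c%:E * \int[mu]_x expeR (mine (g x) k%:E) <= a) ->
  c%:E * \int[mu]_x expeR (g x) <= a.
Proof.
rewrite le_eqVlt => /predU1P[<- trunc_le|c0 trunc_le].
  by have := trunc_le 0%R; rewrite !mul0e.
have expg0 x : 0 <= expeR (g x) by exact: expeR_ge0.
rewrite ge0_integralTE// -ereal_sup_pZl//.
apply: ge_ereal_sup => _ [_ [s s_le <-] <-].
(* s is bounded by the sum m of its values, and m < e^m *)
pose m := (\sum_(r \in range s) r)%R.
have s_le_m x : (s x <= m)%R.
  rewrite /m (fsbigD1 (s x)) ?lerDl; [|exact: fimfunP|by exists x].
  by rewrite fsumr_ge0// => r [[z _ <-] _]; exact: fun_ge0.
apply: le_trans (trunc_le m); rewrite lee_pmul2l ?lte_fin// ge0_integralTE; last first.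
  by move=> x; exact: expeR_ge0.
apply: ereal_sup_ubound; exists s => //= x.
have [_|_] := leP (g x) m%:E; first exact: s_le.
rewrite /= lee_fin (le_trans (s_le_m x))//.
by apply: le_trans (expR_ge1Dx m); rewrite lerDr.
Qed.

End ge0_integral_nonmeasurable.

Lemma fsum_preimage_le1 d (T : measurableType d) (R : realType)
    (P : probability T R) (g : T -> R) (s : set R) :
  finite_set s -> (forall r, s r -> 0 <= r <= 1)%R ->
  (forall r, s r -> measurable (g @^-1` [set r])) ->
  \sum_(r \in s) r%:E * P (g @^-1` [set r]) <= 1.
Proof.
move=> sfin s01 mg; apply: (@le_trans _ _ (\sum_(r \in s) P (g @^-1` [set r]))).
  apply: lee_fsum => // r sr; have /andP[r0 r1] := s01 r sr.
  by apply: gee_pMl => //; rewrite lee_fin.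
rewrite -measure_fin_bigcup//; last by move=> i j _ _ [y [/= -> ->]].
by apply: probability_le1; exact: fin_bigcup_measurable.
Qed.

Lemma ge0_integral_le1 d (T : measurableType d) (R : realType)
    (P : probability T R) (f : T -> \bar R) :
  (forall x, 0 <= f x) -> (forall x, f x <= 1) -> \int[P]_x f x <= 1.
Proof.
move=> f0 f1; apply: le_trans (@ge0_le_integralT _ _ _ P _ (fun _ => 1) f0 f1) _.
by rewrite integral_cst// mul1e; exact: probability_le1.
Qed.

Section Rn.
Context {R : realType} {n : nat}.
Implicit Types x y z : 'rV[R]_n.

Lemma Rn_open_measurable (U : set 'rV[R]_n) : open U -> measurable (U : set (Rn R n)).
Proof. exact: sub_gen_smallest. Qed.

Lemma Rn_continuous_measurable (g : 'rV[R]_n -> 'rV[R]_n) : continuous g ->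
  measurable_fun [set: Rn R n] (g : Rn R n -> Rn R n).
Proof.
move=> gc; apply: (@measurability _ _ (Rn R n) (Rn R n) setT g (@open 'rV[R]_n)) => //.
move=> _ [B oB <-]; rewrite setTI; apply: Rn_open_measurable.
by apply: open_comp => // x _.
Qed.

Lemma dotp0l y : dotp 0 y = 0%R.
Proof. by rewrite /dotp big1// => i _; rewrite mxE mul0r. Qed.

Lemma dotp0r x : dotp x 0 = 0%R.
Proof. by rewrite /dotp big1// => i _; rewrite mxE mulr0. Qed.

Lemma dotpDl x y z : dotp (x + y) z = (dotp x z + dotp y z)%R.
Proof. by rewrite /dotp -big_split; apply: eq_bigr => i _; rewrite mxE mulrDl. Qed.

Lemma dotpZl (a : R) x z : dotp (a *: x) z = (a * dotp x z)%R.
Proof. by rewrite /dotp mulr_sumr; apply: eq_bigr => i _; rewrite mxE mulrA. Qed.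

Lemma continuous_dotpl z : continuous (fun x => dotp x z).
Proof.
apply: continuous_big => [|i _ x]; first exact: add_continuous.
by apply: continuousM; [exact: coord_continuous|exact: cst_continuous].
Qed.

End Rn.

Section symmetrization_mass.
Context (R : realType) (n : nat) (mu : probability (Rn R n) R).
Local Notation mubar := (symmetrization mu).

Lemma symmetrizationE A : mubar A = \int[mu]_x mu [set y | A (x - y)%R].
Proof.
apply: eq_integral => x _; congr (mu _).
by apply/seteqP; split => y; rewrite /xsection /preimage /= in_setE.
Qed.

Lemma symmetrization_set0 : mubar set0 = 0.
Proof.
rewrite symmetrizationE; apply: integral0_eq => x _.
by rewrite (_ : [set y | set0 _] = set0) ?measure0.
Qed.

Lemma sintegral_symmetrization_le1 (h : {nnsfun Rn R n >-> R}) :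
  (forall x, h x <= 1)%R -> sintegral mubar h <= 1.
Proof.
move=> h1; rewrite sintegralE_setfun; last exact: symmetrization_set0.
have h01 r : range h r -> (0 <= r <= 1)%R by move=> [z _ <-]; rewrite fun_ge0 h1.
pose G r (x : Rn R n) := r%:E * mu [set y | h (x - y)%R = r].
have G0 r x : 0 <= G r x.
  have [/h01/andP[r0 _]|hr] := pselect (range h r); first by rewrite mule_ge0.
  rewrite /G (_ : [set y | _] = set0) ?measure0 ?mule0//.
  by apply/seteqP; split => y //= hy; apply: hr; exists (x - y)%R.
have sum_G_le1 (x : Rn R n) : \sum_(r \in range h) G r x <= 1.
  apply: fsum_preimage_le1 => // r _.
  have xB : continuous (fun y : 'rV[R]_n => x - y)%R.
    by move=> y; apply: continuousB; [exact: cst_continuous|exact: cvg_id].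
  have := Rn_continuous_measurable xB measurableT (measurable_funPTI h (measurable_set1 r)).
  by rewrite setTI.
apply: (@le_trans _ _ (\sum_(r \in range h) \int[mu]_x G r x)).
  apply: lee_fsum => // r /h01/andP[r0 _]; rewrite symmetrizationE.
  exact: ge0_integralZl_le.
rewrite fsbig_finite//; apply: le_trans (ge0_integral_sum_le mu _ G0) _.
apply: ge0_integral_le1 => x; first exact: sume_ge0.
by rewrite -fsbig_finite//; exact: sum_G_le1.
Qed.

Lemma logLaplace0_symmetrization_le0 : logLaplace mubar 0 <= 0.
Proof.
rewrite /logLaplace lne_le0.
under eq_fun do rewrite dotp0l expeR0.
rewrite ge0_integralTE_setfun; [|exact: symmetrization_set0|by []].
apply: ge_ereal_sup => _ [h h1 <-]; apply: sintegral_symmetrization_le1 => x.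
by rewrite -lee_fin h1.
Qed.

End symmetrization_mass.

Section legendre.
Context (R : realType) (n : nat) (nu : set (Rn R n) -> \bar R).
Local Notation L := (legendre_logLaplace nu).

Lemma legendre_midpoint (x y : 'rV[R]_n) :
  2%:E * L (2^-1 *: x) <= L (x - y) + L y.
Proof.
rewrite /legendre_logLaplace -ereal_sup_pZl//.
apply: ge_ereal_sup => _ [_ [z _ <-] <-].
have -> : 2%:E * ((dotp (2^-1 *: x) z)%:E - logLaplace nu z) =
          ((dotp (x - y) z)%:E - logLaplace nu z) + ((dotp y z)%:E - logLaplace nu z).
  rewrite dotpZl -{1}(subrK y x) (dotpDl (x - y) y).
  case: (logLaplace nu z) => [c| |] /=.
  - by rewrite -!EFinB -EFinD -EFinM; congr EFin; lra.
  - by rewrite !addeNy mulrNy gtr0_sg// mul1e.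
  - by rewrite !addey// mulry gtr0_sg// mul1e.
by apply: leeD; apply: ereal_sup_ubound; exists z.
Qed.

Lemma open_legendre_gt (a : R) : open [set x : 'rV[R]_n | a%:E < L x].
Proof.
have -> : [set x : 'rV[R]_n | a%:E < L x] =
    \bigcup_(z in setT) [set x | a%:E < (dotp x z)%:E - logLaplace nu z].
  apply/seteqP; split => x /=.
    by move/ereal_sup_gt => [_ [z _ <-] az]; exists z.
  by move=> [z _ az]; apply: lt_le_trans az _; apply: ereal_sup_ubound; exists z.
apply: bigcup_open => z _; case: (logLaplace nu z) => [c| |].
- have -> : [set x | a%:E < (dotp x z)%:E - c%:E] =
      (fun x => dotp x z) @^-1` [set r | (a + c)%:E < r%:E].
    by apply/seteqP; split => x /=; rewrite -EFinB !lte_fin ltrBrDr.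
  by apply: open_comp => [x _|]; [exact: continuous_dotpl|exact: open_ereal_gt].
- rewrite (_ : [set x | _] = set0); first exact: open0.
  by apply/seteqP; split => x //=; rewrite addeNy.
- rewrite (_ : [set x | _] = setT); first exact: openT.
  by apply/seteqP; split => x //= _; rewrite addey// ltry.
Qed.

Hypothesis logLaplace0_le0 : logLaplace nu 0 <= 0.

Lemma legendre_ge0 x : 0 <= L x.
Proof.
have : (dotp x 0)%:E - logLaplace nu 0 <= L x by apply: ereal_sup_ubound; exists 0%R.
by apply: le_trans; rewrite dotp0r sub0e oppe_ge0.
Qed.

Definition legendre_trunc (k : R) (x : Rn R n) : R := fine (mine (L x) k%:E).

Lemma legendre_truncE k x : (legendre_trunc k x)%:E = mine (L x) k%:E.
Proof.
rewrite fineK// fin_numE; apply/andP; split.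
  by rewrite gt_eqF// lt_min (lt_le_trans _ (legendre_ge0 x)) ?ltNy0 ?ltNyr.
by rewrite lt_eqF// gt_min ltry orbT.
Qed.

Lemma measurable_legendre_trunc k : measurable_fun [set: Rn R n] (legendre_trunc k).
Proof.
apply: (measurability _ (measurable_realfun.RGenOInfty.measurableE R)) => //.
move=> _ [_ [a ->] <-]; rewrite setTI.
have -> : legendre_trunc k @^-1` `]a, +oo[ = [set x | a%:E < L x] `&` [set _ | a < k]%R.
  rewrite predeqE => x /=; rewrite -/(legendre_trunc k x) in_itv /= andbT.
  have -> : (a < legendre_trunc k x)%R = (a%:E < mine (L x) k%:E).
    by rewrite -legendre_truncE lte_fin.
  by rewrite lt_min lte_fin; split => [/andP[]|[-> ->]].
apply: measurableI; first by apply: Rn_open_measurable; exact: open_legendre_gt.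
have [ak|ka] := boolP (a < k)%R.
  by rewrite (_ : [set _ | _] = setT)//; apply/seteqP; split.
by rewrite (_ : [set _ | _] = set0)//; apply/seteqP; split => x //=; rewrite (negbTE ka).
Qed.

Lemma legendre_trunc_bounded k : exists M : R, forall x, (`|legendre_trunc k x| <= M)%R.
Proof.
exists `|k|%R => x; have := legendre_truncE k x; set t := legendre_trunc k x => tE.
rewrite ler_norml -2!lee_fin tE le_min ge_min (le_trans _ (legendre_ge0 x)) ?lee_fin ?oppr_le0//.
by rewrite lerNl ler_normr lexx orbT ler_norm orbT.
Qed.

Lemma inf_conv_legendre_trunc_ge k x :
  mine (2%:E * L (2^-1 *: x)) k%:E <= inf_conv L (legendre_trunc k) x.
Proof.
apply: le_ereal_inf_tmp => _ [y _ <-]; rewrite legendre_truncE.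
have [_|_] := leP (L y) k%:E.
  by rewrite ge_min legendre_midpoint.
by rewrite ge_min orbC leeDr ?legendre_ge0.
Qed.

Lemma tau_legendre_trunc (mu : probability (Rn R n) R) k : property_tau mu L ->
  \int[mu]_x expeR (mine (2%:E * L (2^-1 *: x)) k%:E) * \int[mu]_x expeR (- L x) <= 1.
Proof.
move=> tau.
have integral_expeR_ge0 (f : Rn R n -> \bar R) : 0 <= \int[mu]_x expeR (f x).
  by apply: integral_ge0 => x _; exact: expeR_ge0.
apply: le_trans (tau _ (measurable_legendre_trunc k) (legendre_trunc_bounded k)).
apply: lee_pmul => //; apply: ge0_le_integralT => x; rewrite ?expeR_ge0// lee_expeR.
  exact: inf_conv_legendre_trunc_ge.
by rewrite legendre_truncE leeN2 ge_min lexx.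
Qed.

End legendre.

Theorem lemma2 (R : realType) (n : nat) (mu : probability (Rn R n) R) :
  IC 1 mu ->
  (\int[mu]_(x in [set: Rn R n])
      expeR (2%:E * legendre_logLaplace (symmetrization mu) (2^-1 *: x)%R)) *
  (\int[mu]_(x in [set: Rn R n])
      expeR (- legendre_logLaplace (symmetrization mu) x)) <= 1.
Proof.
set L := legendre_logLaplace (symmetrization mu) => IC1.
have Lam0 := logLaplace0_symmetrization_le0 mu.
have tau : property_tau mu L.
  suff -> : L = (fun x => L (1^-1 *: x)) by exact: IC1.
  by apply/funext => x; rewrite invr1 scale1r.
set B := \int[mu]_x expeR (- L x).
have B_ge0 : 0 <= B by apply: integral_ge0 => x _; exact: expeR_ge0.
have B_le1 : B <= 1.
  apply: ge0_integral_le1 => x; first exact: expeR_ge0.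
  by rewrite -expeR0 lee_expeR oppe_le0 (legendre_ge0 Lam0).
have Bfin : B \is a fin_num by rewrite ge0_fin_numE// (le_lt_trans B_le1) ?ltry.
rewrite -(fineK Bfin) muleC; apply: integral_expeR_le_trunc; first exact: fine_ge0.
by move=> k; rewrite fineK// muleC; exact: (tau_legendre_trunc Lam0).
Qed.
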